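(* Consider an arbitrary sequence of instances $\{\mathcal{I}_N\}$ of the non-binary voting game and an arbitrary sequence of strategy profiles $\{\Sigma_N\}_{N\ge1}$, and let $f^N$ be the excess expected vote share of $\Sigma_N$. (i) If $\liminf_{N\to\infty}\sqrt N f^N=+\infty$, then $\lim_{N\to\infty}A(\Sigma_N)=1$. (ii) If there exist a constant $\eta<0$ and an infinite set $\mathcal{N}\subseteq\mathbb{N}$ such that $\sqrt N f^N\le\eta$ for all $N\in\mathcal{N}$, then there exist constants $N_\eta>0$ and $c>0$ such that $A(\Sigma_N)\le1-c$ for all $N\in\mathcal{N}$ with $N>N_\eta$. (iii) If there exist a constant $\eta\ge0$ and an infinite set $\mathcal{N}\subseteq\mathbb{N}$ such that $\sqrt N f^N\le\eta$ for all $N\in\mathcal{N}$, and a constant $\psi>0$ such that $\mathrm{Var}(\sum_{n=1}^NX_n^N\mid W=w)\ge\psi N$ for all $N\in\mathcal{N}$ and all states $w$, then there exist constants $N_\eta>0$ and $c>0$ such that $A(\Sigma_N)\le1-c$ for all $N\in\mathcal{N}$ with $N>N_\eta$.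
   Context: Non-binary voting game. $N$ agents each vote for $\mathbf{A}$ or $\mathbf{R}$. World state $W\in\{1,\dots,\mathcal{W}\}$ (unobserved), prior $P_w>0$. Conditional on $W$, each agent independently receives a signal $S_n\in\{1,\dots,M\}$ with $P_{mw}=\Pr[S_n=m\mid W=w]$, satisfying stochastic dominance. Threshold $\mu\in(0,1)$: $\mathbf{A}$ wins iff at least $\mu N$ agents vote $\mathbf{A}$, else $\mathbf{R}$. Agents have utilities $v_n$ on states $\times\{\mathbf{A},\mathbf{R}\}$ with values in $\{0,\dots,B\}$, $v_n(w,\mathbf{A})$ strictly increasing, $v_n(w,\mathbf{R})$ strictly decreasing in $w$. Constants $\alpha^{\mathbf{A}}_w$, $\alpha^{\mathbf{R}}_w=1-\alpha^{\mathbf{A}}_w$ independent of $N$: exactly $\lfloor\alpha^{\mathbf{R}}_wN\rfloor$ agents prefer $\mathbf{R}$ in state $w$; $\alpha^{\mathbf{A}}_w\ne\mu$. Informed majority decision in $w$: $\mathbf{A}$ if $\alpha^{\mathbf{A}}_w>\mu$, else $\mathbf{R}$. $\mathcal{L}=\{w:\alpha^{\mathbf{A}}_w<\mu\}$, $\mathcal{H}=\{w:\alpha^{\mathbf{A}}_w>\mu\}$, both nonempty. A sequence of instances: $\mathcal{I}_N$ has $N$ agents, all share $\mu$, $(P_w)$, $(P_{mw})$, $(\alpha^{\mathbf{A}}_w)$; utilities arbitrary. Strategy $(\beta_1,\dots,\beta_M)$: probability of voting $\mathbf{A}$ on each signal. $\lambda^{\mathbf{X}}_w(\Sigma)$: ex-ante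 probability that $\mathbf{X}$ wins in state $w$. Fidelity $A(\Sigma)=\sum_{w\in\mathcal{L}}P_w\lambda^{\mathbf{R}}_w(\Sigma)+\sum_{w\in\mathcal{H}}P_w\lambda^{\mathbf{A}}_w(\Sigma)$. For $\Sigma_N$, $X_n^N=1$ if agent $n$ votes $\mathbf{A}$, $0$ otherwise; $f^N_{w\mathbf{A}}=\frac1N\sum_nE[X_n^N\mid W=w]-\mu$, $f^N_{w\mathbf{R}}=\frac1N\sum_nE[1-X_n^N\mid W=w]-(1-\mu)$, and $f^N=\min\big(\min_{w\in\mathcal{H}}f^N_{w\mathbf{A}},\min_{w\in\mathcal{L}}f^N_{w\mathbf{R}}\big)$. *)

From HB Require Import structures.
From mathcomp Require Import all_boot all_order all_algebra.
From mathcomp Require Import reals.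
Set Implicit Arguments. Unset Strict Implicit. Unset Printing Implicit Defensive.
Import Order.TTheory GRing.Theory Num.Theory.
Local Open Scope ring_scope.

(* States are 'I_Wn.+1 (i.e. w = 1..W with W = Wn+1, shifted to 0..Wn);
   signals are 'I_M; agents of instance N are 'I_N.
   Pm m w = Pr[S_n = m | W = w];  beta n m = prob. agent n votes A on signal m. *)

Section Game.
Variable R : realType.

Definition weight (Wn M N : nat) (Pm : 'I_M -> 'I_Wn.+1 -> R)
  (beta : 'I_N -> 'I_M -> R) (w : 'I_Wn.+1)
  (s : {ffun 'I_N -> 'I_M}) (x : {ffun 'I_N -> bool}) : R :=
  \prod_(n < N) (Pm (s n) w * (if x n then beta n (s n) else 1 - beta n (s n))).

Definition condE (Wn M N : nat) (Pm : 'I_M -> 'I_Wn.+1 -> R)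
  (beta : 'I_N -> 'I_M -> R) (w : 'I_Wn.+1) (g : {ffun 'I_N -> bool} -> R) : R :=
  \sum_(s : {ffun 'I_N -> 'I_M}) \sum_(x : {ffun 'I_N -> bool})
     weight Pm beta w s x * g x.

Definition votesA (N : nat) (x : {ffun 'I_N -> bool}) : R := \sum_(n < N) (x n)%:R.

Definition lamA Wn M N Pm beta (mu : R) w : R :=
  @condE Wn M N Pm beta w (fun x => if mu * N%:R <= votesA x then 1 else 0).
Definition lamR Wn M N Pm beta (mu : R) w : R :=
  @condE Wn M N Pm beta w (fun x => if mu * N%:R <= votesA x then 0 else 1).

Definition fidelity Wn M N (Pw : 'I_Wn.+1 -> R) Pm beta (mu : R)
  (alpha : 'I_Wn.+1 -> R) : R :=
  \sum_(w | alpha w < mu) Pw w * @lamR Wn M N Pm beta mu w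
  + \sum_(w | mu < alpha w) Pw w * @lamA Wn M N Pm beta mu w.

Definition fA Wn M N Pm beta (mu : R) w : R :=
  N%:R^-1 * \sum_(n < N) @condE Wn M N Pm beta w (fun x => (x n)%:R) - mu.
Definition fR Wn M N Pm beta (mu : R) w : R :=
  N%:R^-1 * \sum_(n < N) @condE Wn M N Pm beta w (fun x => 1 - (x n)%:R)
  - (1 - mu).

(* f^N = min( min_{w in H} fA_w , min_{w in L} fR_w ); since alpha_w <> mu
   every state is in exactly one of H, L, so this is the min over all states of
   the per-state term below. *)
Definition fterm Wn M N Pm beta (mu : R) (alpha : 'I_Wn.+1 -> R) w : R :=
  if mu < alpha w then @fA Wn M N Pm beta mu w else @fR Wn M N Pm beta mu w.
Definition excess Wn M N Pm beta (mu : R) (alpha : 'I_Wn.+1 -> R) : R :=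
  \big[Num.min/@fterm Wn M N Pm beta mu alpha ord0]_(w < Wn.+1)
     @fterm Wn M N Pm beta mu alpha w.

Definition varA Wn M N Pm beta w : R :=
  @condE Wn M N Pm beta w (fun x => votesA x ^+ 2)
  - (@condE Wn M N Pm beta w (fun x => votesA x)) ^+ 2.

End Game.

(* Conditionally on the state w the votes are independent Bernoulli variables
   with parameters q_n = sum_m P_mw beta_nm, and the decision is wrong in w
   exactly when the centred vote count S, oriented towards the wrong outcome,
   reaches the margin T_w = N f_w.  As Var S <= N / 4, Cantelli's inequality
   gives P(wrong) <= N / (4 T_w^2) when T_w > 0, which yields (i) once
   sqrt N f^N -> oo, and P(wrong) >= 4 T_w^2 / (N + 4 T_w^2) when T_w < 0,
   which yields (ii) in a state attaining f^N.  In (iii) the margin is only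
   O(sqrt N) while Var S >= psi N: the Paley-Zygmund inequality for the
   exponential tilt e^(u S), u of order 1 / sqrt (Var S), shows that S exceeds
   a fixed multiple of its standard deviation with probability bounded below. *)

From HB Require Import structures.
From mathcomp Require Import all_boot all_order all_algebra.
From mathcomp Require Import reals sequences exp.
From mathcomp Require Import ring lra.
Import Order.TTheory GRing.Theory Num.Theory.
Local Open Scope ring_scope.
Set Implicit Arguments. Unset Strict Implicit. Unset Printing Implicit Defensive.

Section ExpBounds.
Variable R : realType.
Implicit Types z a : R.

Lemma expR_ge_quadratic z : -2 <= z -> 1 + z + z ^+ 2 / 4 <= expR z.
Proof.
move=> z_ge.
have -> : expR z = expR (z / 2) * expR (z / 2) by rewrite -expRD; congr expR; lra.
have -> : 1 + z + z ^+ 2 / 4 = (1 + z / 2) * (1 + z / 2) by rewrite expr2; field.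
by apply: ler_pM; [lra | lra | exact: expR_ge1Dx | exact: expR_ge1Dx].
Qed.

Lemma expR_mul_le1 z a : a <= expR (- z) -> expR z * a <= 1.
Proof.
move=> a_le; have ez0 := expR_gt0 z.
rewrite -[X in _ <= X](mulfV (lt0r_neq0 ez0)) -expRN.
by apply: ler_wpM2l; [exact: ltW |].
Qed.

Lemma expR_le_quadratic z : -1 <= z <= 1 -> expR z <= 1 + z + 2 * z ^+ 2.
Proof.
case/andP=> z_ge z_le.
have low := expR_ge_quadratic (z := - z) ltac:(lra).
have low_gt0 : 0 < 1 + - z + (- z) ^+ 2 / 4.
  have -> : 1 + - z + (- z) ^+ 2 / 4 = (1 - z / 2) ^+ 2 by rewrite !expr2; field.
  by apply: exprn_gt0; lra.
have prod_ge1 : 1 <= (1 + z + 2 * z ^+ 2) * (1 + - z + (- z) ^+ 2 / 4).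
  have -> : (1 + z + 2 * z ^+ 2) * (1 + - z + (- z) ^+ 2 / 4) =
     1 + z ^+ 2 * ((1 - z) * (5 / 4 - z / 2)) by rewrite !expr2; field.
  suff : 0 <= z ^+ 2 * ((1 - z) * (5 / 4 - z / 2)) by lra.
  by apply: mulr_ge0; [exact: sqr_ge0 | apply: mulr_ge0; lra].
have := expR_mul_le1 low; have := expR_gt0 z; nra.
Qed.

Lemma expR_half_le a : 0 <= a <= 1 -> expR (a / 2) <= 1 + a.
Proof.
case/andP=> a_ge0 a_le1.
have := expR_mul_le1 (expR_ge1Dx (- (a / 2))); have := expR_gt0 (a / 2); nra.
Qed.

End ExpBounds.

Section BernoulliProduct.
Variables (R : realType) (N : nat) (q : 'I_N -> R).

Definition bern_mass (x : {ffun 'I_N -> bool}) : R :=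
  \prod_n (if x n then q n else 1 - q n).

Definition bernE (g : {ffun 'I_N -> bool} -> R) : R := \sum_x bern_mass x * g x.

Definition bernP (A : {ffun 'I_N -> bool} -> bool) : R :=
  bernE (fun x => if A x then 1 else 0).

Definition coordE n (h : bool -> R) : R := q n * h true + (1 - q n) * h false.

Definition var_sum (d : 'I_N -> bool -> R) : R := \sum_n coordE n (fun b => d n b ^+ 2).

Lemma bernE_prod (g : 'I_N -> bool -> R) :
  bernE (fun x => \prod_n g n (x n)) = \prod_n coordE n (g n).
Proof.
rewrite /bernE /bern_mass.
transitivity (\prod_n \sum_(b : bool) ((if b then q n else 1 - q n) * g n b)).
  by rewrite bigA_distr_bigA; apply: eq_bigr => x _; rewrite big_split.
by apply: eq_bigr => n _; rewrite big_bool.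
Qed.

Lemma eq_bernE f g : (forall x, f x = g x) -> bernE f = bernE g.
Proof. by move=> fg; apply: eq_bigr => x _; rewrite fg. Qed.

Lemma bernE_sum (I : finType) (F : I -> {ffun 'I_N -> bool} -> R) :
  bernE (fun x => \sum_i F i x) = \sum_i bernE (F i).
Proof. by rewrite /bernE exchange_big; apply: eq_bigr => x _; rewrite mulr_sumr. Qed.

Lemma bernED f g : bernE (fun x => f x + g x) = bernE f + bernE g.
Proof. by rewrite /bernE -big_split; apply: eq_bigr => x _; rewrite mulrDr. Qed.

Lemma bernEZ c f : bernE (fun x => c * f x) = c * bernE f.
Proof. by rewrite /bernE mulr_sumr; apply: eq_bigr => x _; rewrite mulrCA. Qed.

Lemma bernEN f : bernE (fun x => - f x) = - bernE f.
Proof. by rewrite -mulN1r -bernEZ; apply: eq_bernE => x; rewrite mulN1r. Qed.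

Lemma bernE1 : bernE (fun _ => 1) = 1.
Proof.
transitivity (\prod_n coordE n (fun _ => 1)).
  by rewrite -(bernE_prod (fun _ _ => 1)); apply: eq_bernE => x; rewrite big1.
by apply: big1 => n _; rewrite /coordE; ring.
Qed.

Lemma bernE_cst c : bernE (fun _ => c) = c.
Proof.
transitivity (bernE (fun _ => c * 1)); first by apply: eq_bernE => x; rewrite mulr1.
by rewrite bernEZ bernE1 mulr1.
Qed.

Lemma bernE_coord i (h : bool -> R) : bernE (fun x => h (x i)) = coordE i h.
Proof.
pose g n := if n == i then h else fun _ => 1.
have gE x : \prod_n g n (x n) = h (x i).
  by rewrite (bigD1 i) //= /g eqxx big1 ?mulr1 // => n /negbTE ->.
rewrite -(eq_bernE gE) bernE_prod (bigD1 i) //= /g eqxx big1 ?mulr1 // => n /negbTE ->.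
by rewrite /coordE; ring.
Qed.

Lemma bernE_coord2 i j (h k : bool -> R) : i != j ->
  bernE (fun x => h (x i) * k (x j)) = coordE i h * coordE j k.
Proof.
move=> ij; pose g n := if n == i then h else if n == j then k else fun _ => 1.
have [gi gj] : g i = h /\ g j = k by rewrite /g eqxx eq_sym (negbTE ij) eqxx.
have g1 n : n != i -> n != j -> g n = fun _ => 1 by rewrite /g => /negbTE -> /negbTE ->.
have gE x : \prod_n g n (x n) = h (x i) * k (x j).
  rewrite (bigD1 i) //= (bigD1 j) 1?eq_sym //= gi gj big1 ?mulr1 // => n /andP[ni nj].
  by rewrite g1.
rewrite -(eq_bernE gE) bernE_prod (bigD1 i) //= (bigD1 j) 1?eq_sym //= gi gj.
rewrite big1 ?mulr1 // => n /andP[ni nj]; rewrite g1 // /coordE; ring.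
Qed.

(* The cross terms vanish by independence, as every summand is centred. *)
Lemma bernE_sqr_sum (d : 'I_N -> bool -> R) : (forall n, coordE n (d n) = 0) ->
  bernE (fun x => (\sum_n d n (x n)) ^+ 2) = var_sum d.
Proof.
move=> d_centred.
rewrite (eq_bernE (g := fun x => \sum_i \sum_j d i (x i) * d j (x j))); last first.
  by move=> x; rewrite expr2 mulr_suml; apply: eq_bigr => i _; rewrite mulr_sumr.
rewrite bernE_sum; apply: eq_bigr => i _.
rewrite bernE_sum (bigD1 i) //= big1 ?addr0 => [|j ji].
  by rewrite -bernE_coord; apply: eq_bernE => x; rewrite expr2.
by rewrite bernE_coord2 1?eq_sym // (d_centred j) mulr0.
Qed.

Lemma coordE_affine n a b c (h : bool -> R) :
  coordE n (fun x => a + b * h x + c * h x ^+ 2) =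
  a + b * coordE n h + c * coordE n (fun x => h x ^+ 2).
Proof. by rewrite /coordE; ring. Qed.

Lemma coordEZ n c (h : bool -> R) : coordE n (fun b => c * h b) = c * coordE n h.
Proof. by rewrite /coordE; ring. Qed.

Lemma var_sumZ c d : var_sum (fun n b => c * d n b) = c ^+ 2 * var_sum d.
Proof. by rewrite /var_sum mulr_sumr; apply: eq_bigr => n _; rewrite /coordE !exprMn; ring. Qed.

Lemma bernE_expR_sum (d : 'I_N -> bool -> R) :
  bernE (fun x => expR (\sum_n d n (x n))) = \prod_n coordE n (fun b => expR (d n b)).
Proof. by rewrite -bernE_prod; apply: eq_bernE => x; rewrite expR_sum. Qed.

Lemma bernE_sum_centred (d : 'I_N -> bool -> R) :
  (forall n, coordE n (d n) = 0) -> bernE (fun x => \sum_n d n (x n)) = 0.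
Proof. by move=> d0; rewrite bernE_sum big1 // => n _; rewrite bernE_coord. Qed.

Hypothesis q01 : forall n, 0 <= q n <= 1.

Lemma ler_coordE n (h k : bool -> R) :
  (forall b, h b <= k b) -> coordE n h <= coordE n k.
Proof.
move=> hk; have /andP[? ?] := q01 n.
by apply: lerD; apply: ler_wpM2l; rewrite ?hk //; lra.
Qed.

Lemma bern_mass_ge0 x : 0 <= bern_mass x.
Proof. by apply: prodr_ge0 => n _; have /andP[? ?] := q01 n; case: (x n); lra. Qed.

Lemma ler_bernE f g : (forall x, f x <= g x) -> bernE f <= bernE g.
Proof. by move=> fg; apply: ler_sum => x _; apply: ler_wpM2l; [exact: bern_mass_ge0|]. Qed.

Lemma bernE_ge0 f : (forall x, 0 <= f x) -> 0 <= bernE f.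
Proof. by move=> f0; rewrite -(bernE_cst 0); exact: ler_bernE. Qed.

Lemma bernP_ge0 A : 0 <= bernP A.
Proof. by apply: bernE_ge0 => x; case: (A x); lra. Qed.

Lemma le_bernP (A B : {ffun 'I_N -> bool} -> bool) :
  (forall x, A x -> B x) -> bernP A <= bernP B.
Proof.
move=> AB; apply: ler_bernE => x.
by case: ifP => [/AB -> | _]; [lra | case: (B x); lra].
Qed.

Lemma bernPC A : bernP A + bernP (fun x => ~~ A x) = 1.
Proof. by rewrite -bernED -[RHS]bernE1; apply: eq_bernE => x; case: (A x) => /=; lra. Qed.

(* Markov's inequality for [(Y + b) ^+ 2] with the optimal shift [b = V / a]. *)
Lemma bernP_cantelli (Y : {ffun 'I_N -> bool} -> R) V a :
  bernE Y = 0 -> bernE (fun x => Y x ^+ 2) <= V -> 0 < a -> 0 < V ->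
  bernP (fun x => a <= Y x) <= V / (V + a ^+ 2).
Proof.
move=> EY0 EY2 a0 V0; set b := V / a.
have b0 : 0 < b by rewrite divr_gt0.
have ab0 : 0 < (a + b) ^+ 2 by apply: exprn_gt0; lra.
have markov x : (if a <= Y x then 1 else 0) <=
    ((a + b) ^+ 2)^-1 * (Y x ^+ 2 + (2 * b * Y x + b ^+ 2)).
  have -> : Y x ^+ 2 + (2 * b * Y x + b ^+ 2) = (Y x + b) ^+ 2 by rewrite !expr2; ring.
  case: ifP => aY; last by apply: mulr_ge0; [rewrite invr_ge0 ltW | exact: sqr_ge0].
  rewrite -[X in X <= _](mulVf (lt0r_neq0 ab0)); apply: ler_wpM2l; first by rewrite invr_ge0 ltW.
  by rewrite !expr2; nra.
apply: le_trans (ler_bernE markov) _.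
rewrite bernEZ !bernED bernEZ bernE_cst EY0 mulr0 add0r.
have -> : V / (V + a ^+ 2) = ((a + b) ^+ 2)^-1 * (V + b ^+ 2).
  by rewrite /b; field; rewrite !lt0r_neq0 //; nra.
by apply: ler_wpM2l; [rewrite invr_ge0 ltW | lra].
Qed.

Lemma bernP_cantelli_lower (Y : {ffun 'I_N -> bool} -> R) V a :
  bernE Y = 0 -> bernE (fun x => Y x ^+ 2) <= V -> a < 0 -> 0 < V ->
  a ^+ 2 / (V + a ^+ 2) <= bernP (fun x => a < Y x).
Proof.
move=> EY0 EY2 a_lt0 V0.
have ENY0 : bernE (fun x => - Y x) = 0 by rewrite bernEN EY0 oppr0.
have ENY2 : bernE (fun x => (- Y x) ^+ 2) <= V by under eq_bernE do rewrite sqrrN.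
have := bernP_cantelli ENY0 ENY2 (_ : 0 < - a) V0; rewrite oppr_gt0 sqrrN => /(_ a_lt0).
have := bernPC (fun x => a < Y x).
have : bernP (fun x => ~~ (a < Y x)) <= bernP (fun x => - a <= - Y x).
  by apply: le_bernP => x; rewrite -leNgt lerN2.
have -> : a ^+ 2 / (V + a ^+ 2) = 1 - V / (V + a ^+ 2).
  by field; rewrite lt0r_neq0 // ltr_pwDl // sqr_ge0.
lra.
Qed.

(* The Cauchy--Schwarz step is the AM--GM inequality
   [Z <= Z ^+ 2 / (2 c) + c / 2] with [c = E[Z ^+ 2] / m]. *)
Lemma bernP_paley_zygmund (Z : {ffun 'I_N -> bool} -> R) th :
  0 <= th < 1 -> 0 < bernE Z ->
  ((1 - th) * bernE Z) ^+ 2 <=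
  bernE (fun x => Z x ^+ 2) * bernP (fun x => th * bernE Z < Z x).
Proof.
case/andP=> th0 th1 EZ0; set m := (1 - th) * bernE Z; set EZ2 := bernE _.
set A := fun x => th * bernE Z < Z x.
have m0 : 0 < m by rewrite mulr_gt0 // subr_gt0.
have EZ2_0 : 0 < EZ2.
  have : bernE (fun x => 2 * bernE Z * Z x - bernE Z ^+ 2) <= EZ2.
    by apply: ler_bernE => x; have := sqr_ge0 (Z x - bernE Z); rewrite !expr2; nra.
  by rewrite bernED bernEZ bernE_cst !expr2; nra.
set c := EZ2 / m; have c0 : 0 < c by rewrite divr_gt0.
have split_A : m <= bernE (fun x => Z x * if A x then 1 else 0).
  suff : bernE Z <= bernE (fun x => Z x * (if A x then 1 else 0) + th * bernE Z).
    by rewrite bernED bernE_cst /m; lra.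
  apply: ler_bernE => x; rewrite /A; case: ltP => ZA; last by lra.
  have : 0 <= th * bernE Z by rewrite mulr_ge0 // ltW.
  lra.
have amgm : bernE (fun x => Z x * if A x then 1 else 0) <=
    bernE (fun x => (2 * c)^-1 * Z x ^+ 2 + c / 2 * if A x then 1 else 0).
  apply: ler_bernE => x; case: (A x); rewrite ?mulr1 ?mulr0 ?addr0; last first.
    by apply: mulr_ge0; [rewrite invr_ge0; lra | exact: sqr_ge0].
  have -> : (2 * c)^-1 * Z x ^+ 2 + c / 2 = Z x + (Z x - c) ^+ 2 / (2 * c).
    by field; rewrite lt0r_neq0.
  have : 0 <= (Z x - c) ^+ 2 / (2 * c) by apply: divr_ge0; [exact: sqr_ge0 | lra].
  lra.
rewrite bernED !bernEZ -/EZ2 -/(bernP A) in amgm.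
have half : (2 * c)^-1 * EZ2 = m / 2 by rewrite /c; field; rewrite !lt0r_neq0.
have m_le : m <= c * bernP A by lra.
have -> : EZ2 * bernP A = m * (c * bernP A) by rewrite /c; field; rewrite lt0r_neq0.
by rewrite expr2 ler_wpM2l // ltW.
Qed.


Lemma coordE_ge0 n (h : bool -> R) : (forall b, 0 <= h b) -> 0 <= coordE n h.
Proof.
by move=> h0; have /andP[? ?] := q01 n; rewrite addr_ge0 ?mulr_ge0 // subr_ge0.
Qed.

Lemma coordE_expR_ge n (h : bool -> R) : coordE n h = 0 -> (forall b, -1 <= h b <= 1) ->
  expR (coordE n (fun b => h b ^+ 2) / 8) <= coordE n (fun b => expR (h b)).
Proof.
move=> h0 h_bd; set v := coordE n _.
have v0 : 0 <= v by apply: coordE_ge0 => b; exact: sqr_ge0.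
have v1 : v <= 1.
  apply: (le_trans (y := coordE n (fun _ => 1))); last by rewrite /coordE; lra.
  by apply: ler_coordE => b; have /andP[? ?] := h_bd b; rewrite expr2; nra.
have -> : v / 8 = v / 4 / 2 by field.
apply: le_trans (expR_half_le _) _; first by apply/andP; split; lra.
apply: (le_trans (y := coordE n (fun b => 1 + 1 * h b + 4^-1 * h b ^+ 2))).
  by rewrite coordE_affine h0 -/v; lra.
apply: ler_coordE => b; have /andP[? ?] := h_bd b.
by have := @expR_ge_quadratic _ (h b) ltac:(lra); lra.
Qed.

Lemma coordE_expR_le n (h : bool -> R) : coordE n h = 0 -> (forall b, -1 <= h b <= 1) ->
  coordE n (fun b => expR (h b)) <= expR (2 * coordE n (fun b => h b ^+ 2)).
Proof.
move=> h0 h_bd; apply: le_trans (expR_ge1Dx _).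
apply: (le_trans (y := coordE n (fun b => 1 + 1 * h b + 2 * h b ^+ 2))).
  by apply: ler_coordE => b; rewrite mul1r; exact: expR_le_quadratic.
by rewrite coordE_affine h0; lra.
Qed.

Lemma bernE_expR_sum_ge (d : 'I_N -> bool -> R) : (forall n, coordE n (d n) = 0) ->
  (forall n b, -1 <= d n b <= 1) ->
  expR (var_sum d / 8) <= bernE (fun x => expR (\sum_n d n (x n))).
Proof.
move=> d0 d_bd; rewrite bernE_expR_sum /var_sum mulr_suml expR_sum.
by apply: ler_prod => n _; rewrite expR_ge0 coordE_expR_ge.
Qed.

Lemma bernE_expR_sum_le (d : 'I_N -> bool -> R) : (forall n, coordE n (d n) = 0) ->
  (forall n b, -1 <= d n b <= 1) ->
  bernE (fun x => expR (\sum_n d n (x n))) <= expR (2 * var_sum d).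
Proof.
move=> d0 d_bd; rewrite bernE_expR_sum /var_sum mulr_sumr expR_sum.
apply: ler_prod => n _; rewrite coordE_expR_le // andbT.
by apply: coordE_ge0 => b; exact: expR_ge0.
Qed.

(* Paley--Zygmund applied to the exponential tilt [Z = expR (u * S)] with
   [u = lam / sqrt V], whose first moment is at least [expR (lam ^+ 2 / 8)] and
   whose second moment is at most [expR (8 * lam ^+ 2)]. *)
Lemma bernP_anticoncentration (d : 'I_N -> bool -> R) lam : (forall n, coordE n (d n) = 0) ->
  (forall n b, -1 <= d n b <= 1) -> 0 < lam -> 4 * lam ^+ 2 <= var_sum d ->
  (1 - expR (-1)) ^+ 2 * expR (- (8 * lam ^+ 2)) <=
  bernP (fun x => Num.sqrt (var_sum d) * (lam / 8 - lam^-1) < \sum_n d n (x n)).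
Proof.
move=> d0 d_bd lam0; set V := var_sum d => V_ge.
have V0 : 0 < V by apply: lt_le_trans V_ge; rewrite mulr_gt0 // exprn_gt0.
set sV := Num.sqrt V; have sV0 : 0 < sV by rewrite sqrtr_gt0.
set u := lam / sV; have u0 : 0 < u by rewrite divr_gt0.
have uV : u ^+ 2 * V = lam ^+ 2 by rewrite /u expr_div_n sqr_sqrtr ?divfK ?lt0r_neq0 ?ltW.
have u_le : 2 * u <= 1.
  have : Num.sqrt ((2 * lam) ^+ 2) <= sV.
    by rewrite ler_wsqrtr // (_ : (2 * lam) ^+ 2 = 4 * lam ^+ 2) //; ring.
  rewrite sqrtr_sqr ger0_norm => [two_lam_le|]; last by rewrite mulr_ge0 // ltW.
  by rewrite /u mulrA ler_pdivrMr // mul1r.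
have scaled_centred k n : coordE n (fun b => k * d n b) = 0.
  by rewrite coordEZ d0 mulr0.
have scaled_bd k n b : 0 <= k <= 1 -> -1 <= k * d n b <= 1.
  by case/andP=> ? ?; have /andP[? ?] := d_bd n b; apply/andP; split; nra.
pose Z (x : {ffun 'I_N -> bool}) := expR (\sum_n u * d n (x n)).
have EZ_ge : expR (lam ^+ 2 / 8) <= bernE Z.
  rewrite -uV -var_sumZ; apply: bernE_expR_sum_ge => // n b.
  by apply: scaled_bd; rewrite ltW //=; lra.
have EZ2_le : bernE (fun x => Z x ^+ 2) <= expR (8 * lam ^+ 2).
  have -> : bernE (fun x => Z x ^+ 2) = bernE (fun x => expR (\sum_n 2 * u * d n (x n))).
    apply: eq_bernE => x; rewrite /Z expr2 -expRD -big_split; congr expR.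
    by apply: eq_bigr => n _ /=; ring.
  have -> : 8 * lam ^+ 2 = 2 * var_sum (fun n b => 2 * u * d n b).
    by rewrite var_sumZ -/V exprMn -uV; ring.
  apply: bernE_expR_sum_le => // n b.
  by apply: scaled_bd; rewrite u_le andbT mulr_ge0 // ltW.
have EZ_ge1 : 1 <= bernE Z.
  apply: le_trans EZ_ge; rewrite -[X in X <= _]expR0 ler_expR.
  by rewrite divr_ge0 ?sqr_ge0.
set th := expR (-1).
have th01 : 0 <= th < 1 by rewrite expR_ge0 /= -expR0 ltr_expR; lra.
have tilt_event x : th * bernE Z < Z x -> sV * (lam / 8 - lam^-1) < \sum_n d n (x n).
  move=> /(le_lt_trans (ler_wpM2l (expR_ge0 _) EZ_ge)).
  rewrite -expRD ltr_expR -mulr_sumr => tilted; rewrite -(ltr_pM2l u0).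
  suff -> : u * (sV * (lam / 8 - lam^-1)) = - 1 + lam ^+ 2 / 8 by [].
  by rewrite /u; field; rewrite !lt0r_neq0.
set P := bernP _.
have PZ := bernP_paley_zygmund th01 (lt_le_trans ltr01 EZ_ge1).
have : (1 - th) ^+ 2 <= expR (8 * lam ^+ 2) * P.
  apply: le_trans (_ : _ <= ((1 - th) * bernE Z) ^+ 2) _.
    by rewrite exprMn ler_peMr ?sqr_ge0 // expr2 -[1]mulr1 ler_pM.
  apply: le_trans PZ _; apply: ler_pM; rewrite ?bernP_ge0 //.
    by apply: bernE_ge0 => // x; exact: sqr_ge0.
  exact: le_bernP tilt_event.
by rewrite expRN ler_pdivrMr ?expR_gt0 // mulrC.
Qed.

End BernoulliProduct.

Section ConditionalVotes.
Variables (R : realType) (Wn M N : nat).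
Variables (Pm : 'I_M -> 'I_Wn.+1 -> R) (beta : 'I_N -> 'I_M -> R).
Hypothesis Pm_ge0 : forall m w, 0 <= Pm m w.
Hypothesis Pm_sum1 : forall w, \sum_m Pm m w = 1.
Hypothesis beta01 : forall n m, 0 <= beta n m <= 1.

Definition vote_prob w n : R := \sum_m Pm m w * beta n m.

Definition vote_var w : R := \sum_n vote_prob w n * (1 - vote_prob w n).

Definition centred_vote w n (b : bool) : R := b%:R - vote_prob w n.

Lemma vote_prob01 w n : 0 <= vote_prob w n <= 1.
Proof.
apply/andP; split.
  by apply: sumr_ge0 => m _; have /andP[? ?] := beta01 n m; rewrite mulr_ge0.
rewrite -(Pm_sum1 w); apply: ler_sum => m _.
by have /andP[? ?] := beta01 n m; rewrite ler_piMr.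
Qed.

(* Summing the joint law over the signal profile leaves the product of
   independent Bernoulli votes with parameters [vote_prob w n]. *)
Lemma condE_bernE w g : condE Pm beta w g = bernE (vote_prob w) g.
Proof.
rewrite /condE /bernE exchange_big; apply: eq_bigr => x _; rewrite -mulr_suml.
congr (_ * _); rewrite /weight /bern_mass.
rewrite -(bigA_distr_bigA (fun n m => Pm m w * (if x n then beta n m else 1 - beta n m))).
apply: eq_bigr => n _; rewrite /vote_prob; case: (x n) => //.
by under eq_bigr do rewrite mulrBr mulr1; rewrite sumrB Pm_sum1.
Qed.

Lemma centred_vote_centred w n : coordE (vote_prob w) n (centred_vote w n) = 0.
Proof. by rewrite /coordE /centred_vote /= mulr1n mulr0n; ring. Qed.

Lemma var_sum_centred_vote w : var_sum (vote_prob w) (centred_vote w) = vote_var w.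
Proof. by apply: eq_bigr => n _; rewrite /coordE /centred_vote /= mulr1n mulr0n; ring. Qed.

Lemma vote_var_le w : vote_var w <= N%:R / 4.
Proof.
rewrite -[N in N%:R]card_ord -sumr_const mulr_suml; apply: ler_sum => n _.
by have := sqr_ge0 (vote_prob w n - 2^-1); rewrite expr2; lra.
Qed.

Lemma votesA_centred w x :
  votesA R x = \sum_n centred_vote w n (x n) + \sum_n vote_prob w n.
Proof. by rewrite -big_split; apply: eq_bigr => n _ /=; rewrite subrK. Qed.

Lemma varAE w : varA Pm beta w = vote_var w.
Proof.
pose S := \sum_n vote_prob w n; pose Y x := \sum_n centred_vote w n (x n).
have EY0 : bernE (vote_prob w) Y = 0.
  exact: bernE_sum_centred (centred_vote_centred w).
have EY2 : bernE (vote_prob w) (fun x => Y x ^+ 2) = vote_var w.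
  by rewrite bernE_sqr_sum; [exact: var_sum_centred_vote | exact: centred_vote_centred].
have E1 : bernE (vote_prob w) (fun x => votesA R x) = S.
  transitivity (bernE (vote_prob w) (fun x => Y x + S)).
    by apply: eq_bernE => x; rewrite (votesA_centred w).
  by rewrite bernED EY0 bernE_cst add0r.
have E2 : bernE (vote_prob w) (fun x => votesA R x ^+ 2) = vote_var w + S ^+ 2.
  transitivity (bernE (vote_prob w) (fun x => Y x ^+ 2 + (2 * S * Y x + S ^+ 2))).
    by apply: eq_bernE => x; rewrite (votesA_centred w) -/S -/(Y x); ring.
  by rewrite !bernED bernEZ EY0 EY2 bernE_cst mulr0 add0r.
by rewrite /varA !condE_bernE E1 E2 addrK.
Qed.

Variables (mu : R) (alpha : 'I_Wn.+1 -> R).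

Definition orient w : R := if mu < alpha w then -1 else 1.

Definition dev w n (b : bool) : R := orient w * centred_vote w n b.

Definition margin w : R := orient w * (mu * N%:R - \sum_n vote_prob w n).

Definition err_prob w : R :=
  if alpha w < mu then lamA Pm beta mu w else lamR Pm beta mu w.

Lemma lamAE w :
  lamA Pm beta mu w = bernP (vote_prob w) (fun x => mu * N%:R <= votesA R x).
Proof. by rewrite /lamA condE_bernE. Qed.

Lemma lamRE w :
  lamR Pm beta mu w = bernP (vote_prob w) (fun x => ~~ (mu * N%:R <= votesA R x)).
Proof. by rewrite /lamR condE_bernE; apply: eq_bernE => x; case: ifP. Qed.

Lemma orient_sqr w : orient w ^+ 2 = 1.
Proof. by rewrite /orient; case: ifP; rewrite ?sqrrN expr1n. Qed.

Lemma dev_centred w n : coordE (vote_prob w) n (dev w n) = 0.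
Proof. by rewrite coordEZ centred_vote_centred mulr0. Qed.

Lemma dev_bounded w n b : -1 <= dev w n b <= 1.
Proof.
have /andP[? ?] := vote_prob01 w n.
by rewrite /dev /centred_vote /orient; case: ifP; case: b => /=; rewrite ?mulr1n ?mulr0n; lra.
Qed.

Lemma var_sum_dev w : var_sum (vote_prob w) (dev w) = vote_var w.
Proof. by rewrite var_sumZ orient_sqr mul1r var_sum_centred_vote. Qed.

Lemma sum_dev w (x : {ffun 'I_N -> bool}) :
  \sum_n dev w n (x n) = orient w * (votesA R x - \sum_n vote_prob w n).
Proof. by rewrite -mulr_sumr (votesA_centred w) addrK. Qed.

Hypothesis alpha_neq_mu : forall w, alpha w != mu.

(* A wrong decision means that the oriented deviation of the vote count
   reaches the margin, strictly in the states of H. *)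
Lemma err_prob_bounds w :
  bernP (vote_prob w) (fun x => margin w < \sum_n dev w n (x n)) <= err_prob w /\
  err_prob w <= bernP (vote_prob w) (fun x => margin w <= \sum_n dev w n (x n)).
Proof.
have q01 := vote_prob01 w.
rewrite /err_prob /margin; case: ltP => [alpha_lt | alpha_ge].
  have o1 : orient w = 1 by rewrite /orient ltNge (ltW alpha_lt).
  by rewrite o1 lamAE; split; apply: (le_bernP q01) => x /=; rewrite sum_dev o1; lra.
have o1 : orient w = -1 by rewrite /orient lt_neqAle alpha_ge eq_sym alpha_neq_mu.
by rewrite o1 lamRE; split; apply: (le_bernP q01) => x /=; rewrite sum_dev o1 -ltNge; lra.
Qed.

Lemma lamA_add_lamR w : lamA Pm beta mu w + lamR Pm beta mu w = 1.
Proof. by rewrite lamAE lamRE bernPC. Qed.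

Lemma err_prob_ge0 w : 0 <= err_prob w.
Proof. by rewrite /err_prob lamAE lamRE; case: ifP => _; exact/bernP_ge0/vote_prob01. Qed.

Lemma fidelityE (Pw : 'I_Wn.+1 -> R) : \sum_w Pw w = 1 ->
  fidelity Pw Pm beta mu alpha = 1 - \sum_w Pw w * err_prob w.
Proof.
move=> Pw_sum1; rewrite /fidelity big_mkcond [X in _ + X]big_mkcond -big_split.
rewrite -[X in X - _]Pw_sum1 -sumrB; apply: eq_bigr => w _ /=.
have := lamA_add_lamR w; rewrite /err_prob.
move=> /(congr1 (fun t => Pw w * t)); rewrite mulr1 mulrDr.
by case: ltgtP (alpha_neq_mu w) => // _ _; lra.
Qed.

Lemma fterm_margin w : (0 < N)%N -> fterm Pm beta mu alpha w = margin w / N%:R.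
Proof.
move=> N_gt0; have N0 : (N%:R : R) != 0 by rewrite pnatr_eq0 -lt0n.
have voteE n : condE Pm beta w (fun x => (x n)%:R) = vote_prob w n.
  by rewrite condE_bernE (bernE_coord _ n (fun b => b%:R)) /coordE /= mulr1n mulr0n; ring.
rewrite /fterm /margin /orient /fA /fR; case: ifP => _.
  by under eq_bigr do rewrite voteE; field.
rewrite (eq_bigr (fun n => 1 - vote_prob w n)) => [|n _]; last first.
  by rewrite condE_bernE (bernE_coord _ n (fun b => 1 - b%:R)) /coordE /= mulr1n mulr0n; ring.
by rewrite sumrB sumr_const card_ord -mulr_natl mulr1; field.
Qed.

Lemma bernE_sum_dev w : bernE (vote_prob w) (fun x => \sum_n dev w n (x n)) = 0.
Proof. exact: bernE_sum_centred (dev_centred w). Qed.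

Lemma bernE_sum_dev_sqr_le w :
  bernE (vote_prob w) (fun x => (\sum_n dev w n (x n)) ^+ 2) <= N%:R / 4.
Proof. by rewrite bernE_sqr_sum ?var_sum_dev ?vote_var_le //; exact: dev_centred. Qed.

Lemma err_prob_le_of_margin_gt0 w : (0 < N)%N -> 0 < margin w ->
  err_prob w <= N%:R / (4 * margin w ^+ 2).
Proof.
move=> N_gt0 m_gt0; have q01 := vote_prob01 w.
have V_gt0 : 0 < N%:R / 4 :> R by rewrite divr_gt0 ?ltr0n.
have m2_gt0 : 0 < margin w ^+ 2 by rewrite exprn_gt0.
apply: le_trans (proj2 (err_prob_bounds w)) _.
apply: le_trans (bernP_cantelli q01 (bernE_sum_dev w) (bernE_sum_dev_sqr_le w) m_gt0 V_gt0) _.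
have -> : N%:R / (4 * margin w ^+ 2) = N%:R / 4 / margin w ^+ 2.
  by field; rewrite lt0r_neq0.
by rewrite ler_pM2l // lef_pV2 ?posrE ?addr_gt0 // lerDr ltW.
Qed.

Lemma err_prob_ge_of_margin_lt0 w : (0 < N)%N -> margin w < 0 ->
  4 * margin w ^+ 2 / (N%:R + 4 * margin w ^+ 2) <= err_prob w.
Proof.
move=> N_gt0 m_lt0; have q01 := vote_prob01 w.
have V_gt0 : 0 < N%:R / 4 :> R by rewrite divr_gt0 ?ltr0n.
have m2_gt0 : 0 < margin w ^+ 2 by rewrite exprn_even_gt0 //= lt_eqF.
have -> : 4 * margin w ^+ 2 / (N%:R + 4 * margin w ^+ 2) =
          margin w ^+ 2 / (N%:R / 4 + margin w ^+ 2).
  by field; rewrite !lt0r_neq0 // addr_gt0 ?ltr0n // (mulr_gt0 m2_gt0).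
apply: le_trans (proj1 (err_prob_bounds w)).
exact: (bernP_cantelli_lower q01 (bernE_sum_dev w) (bernE_sum_dev_sqr_le w) m_lt0 V_gt0).
Qed.

Lemma err_prob_ge_of_margin_small w lam :
  0 < lam -> 4 * lam ^+ 2 <= vote_var w ->
  margin w <= Num.sqrt (vote_var w) * (lam / 8 - lam^-1) ->
  (1 - expR (-1)) ^+ 2 * expR (- (8 * lam ^+ 2)) <= err_prob w.
Proof.
move=> lam0 V_ge m_le; have q01 := vote_prob01 w.
apply: le_trans (proj1 (err_prob_bounds w)).
rewrite -(var_sum_dev w) in V_ge m_le.
apply: le_trans (bernP_anticoncentration q01 (dev_centred w) (dev_bounded w) lam0 V_ge) _.
by apply: le_bernP => // x; apply: le_lt_trans.
Qed.

End ConditionalVotes.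

Lemma bigmin_attained (R : realType) k (F : 'I_k.+1 -> R) :
  exists w, \big[Num.min/F ord0]_(i < k.+1) F i = F w.
Proof.
elim/big_rec: _ => [|i x _ [w ->]]; first by exists ord0.
by rewrite /Order.min; case: ifP => _; [exists i | exists w].
Qed.

Lemma sqrt_natr_sqr (R : realType) N : Num.sqrt (N%:R : R) ^+ 2 = N%:R.
Proof. by rewrite sqr_sqrtr // ler0n. Qed.

Section InstanceSequence.
Variables (R : realType) (Wn M : nat).
Variables (Pw : 'I_Wn.+1 -> R) (Pm : 'I_M -> 'I_Wn.+1 -> R).
Variables (mu : R) (alpha : 'I_Wn.+1 -> R) (beta : forall N : nat, 'I_N -> 'I_M -> R).
Arguments beta : clear implicits.
Hypothesis Pw_gt0 : forall w, 0 < Pw w.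
Hypothesis Pw_sum1 : \sum_w Pw w = 1.
Hypothesis Pm_ge0 : forall m w, 0 <= Pm m w.
Hypothesis Pm_sum1 : forall w, \sum_m Pm m w = 1.
Hypothesis alpha_neq_mu : forall w, alpha w != mu.
Hypothesis beta01 : forall N n m, 0 <= beta N n m <= 1.

Local Notation fid N := (fidelity Pw Pm (beta N) mu alpha).
Local Notation exc N := (excess Pm (beta N) mu alpha).
Local Notation err N := (err_prob Pm (beta N) mu alpha).
Local Notation marg N := (margin Pm (beta N) mu alpha).

Lemma margin_ge_of_excess N w K : (0 < N)%N ->
  K <= Num.sqrt N%:R * exc N -> Num.sqrt N%:R * K <= marg N w.
Proof.
move=> N_gt0 K_le; have N_gt0R : (0 : R) < N%:R by rewrite ltr0n.
have sN_gt0 : 0 < Num.sqrt (N%:R : R) by rewrite sqrtr_gt0.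
apply: (le_trans (y := N%:R * exc N)).
  by rewrite -{2}(@sqrt_natr_sqr R N) expr2 -mulrA ler_pM2l.
by rewrite -(ler_pdivlMl _ _ N_gt0R) mulrC -fterm_margin //; exact: (bigmin_le _ w).
Qed.

Lemma margin_le_of_excess N eta : (0 < N)%N ->
  Num.sqrt N%:R * exc N <= eta -> exists w, marg N w <= Num.sqrt N%:R * eta.
Proof.
move=> N_gt0 exc_le; have N_neq0 : (N%:R : R) != 0 by rewrite pnatr_eq0 -lt0n.
have sN_gt0 : 0 < Num.sqrt (N%:R : R) by rewrite sqrtr_gt0 ltr0n.
have [w excE] := bigmin_attained (fterm Pm (beta N) mu alpha).
exists w; rewrite -[marg N w](divfK N_neq0) -fterm_margin // -excE -/(excess _ _ _ _).
by rewrite -{1}(@sqrt_natr_sqr R N) expr2 mulrC -mulrA ler_pM2l.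
Qed.

Lemma weighted_err_ge0 N w : 0 <= Pw w * err N w.
Proof. by rewrite mulr_ge0 ?(ltW (Pw_gt0 w)) ?(err_prob_ge0 Pm_ge0 Pm_sum1 (@beta01 N)). Qed.

Lemma fidelity_le1 N : fid N <= 1.
Proof.
by rewrite fidelityE // lerBlDr lerDl sumr_ge0 // => w _; exact: weighted_err_ge0.
Qed.

Lemma fidelity_le_err N w c : 0 <= c -> c <= err N w -> fid N <= 1 - Pw w * c.
Proof.
move=> c0 c_le; rewrite fidelityE // lerD2l lerN2 (bigD1 w) //= -[X in X <= _]addr0.
apply: lerD; first by rewrite ler_pM2l.
by apply: sumr_ge0 => v _; exact: weighted_err_ge0.
Qed.

Lemma fidelity_ge N K : (0 < N)%N -> 0 < K -> K <= Num.sqrt N%:R * exc N ->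
  1 - (4 * K ^+ 2)^-1 <= fid N.
Proof.
move=> N_gt0 K_gt0 K_le.
have sN_gt0 : 0 < Num.sqrt (N%:R : R) by rewrite sqrtr_gt0 ltr0n.
have err_le w : err N w <= (4 * K ^+ 2)^-1.
  have m_ge := margin_ge_of_excess w N_gt0 K_le.
  have m_gt0 : 0 < marg N w by apply: lt_le_trans m_ge; rewrite mulr_gt0.
  apply: le_trans
    (err_prob_le_of_margin_gt0 Pm_ge0 Pm_sum1 (@beta01 N) alpha_neq_mu N_gt0 m_gt0) _.
  have sNK_ge0 : 0 <= Num.sqrt N%:R * K by rewrite mulr_ge0 ?ltW.
  have m2_ge : N%:R * K ^+ 2 <= marg N w ^+ 2.
    by rewrite -sqrt_natr_sqr -exprMn !expr2 ler_pM.
  have m2_gt0 : 0 < 4 * marg N w ^+ 2 by rewrite mulr_gt0 // exprn_gt0.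
  have K2_gt0 : 0 < 4 * K ^+ 2 by rewrite mulr_gt0 // exprn_gt0.
  by rewrite (ler_pdivrMr _ _ m2_gt0) (ler_pdivlMl _ _ K2_gt0) -mulrA ler_pM2l // mulrC.
rewrite fidelityE // lerD2l lerN2.
apply: le_trans (ler_sum _ (fun w _ => ler_wpM2l (ltW (Pw_gt0 w)) (err_le w))) _.
by rewrite -mulr_suml Pw_sum1 mul1r.
Qed.

Lemma fidelity_cvg1 :
  (forall K : R, exists N0 : nat, forall N : nat, (N0 <= N)%N ->
     K <= Num.sqrt N%:R * exc N) ->
  forall eps : R, 0 < eps -> exists N0 : nat, forall N : nat, (N0 <= N)%N ->
     `|fid N - 1| < eps.
Proof.
move=> excess_large eps eps_gt0; set K := 1 + eps^-1.
have K_gt0 : 0 < K by rewrite addr_gt0 ?invr_gt0.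
have [N0 N0P] := excess_large K; exists (maxn N0 1) => N.
rewrite geq_max => /andP[N0_le N_gt0].
have fid_ge := fidelity_ge N_gt0 K_gt0 (N0P N N0_le).
rewrite distrC ger0_norm ?subr_ge0 ?fidelity_le1 //.
suff : (4 * K ^+ 2)^-1 < eps by lra.
rewrite -[eps]invrK ltf_pV2 ?posrE ?invr_gt0 ?mulr_gt0 ?exprn_gt0 //.
have : 0 < eps^-1 by rewrite invr_gt0.
by rewrite /K !expr2; nra.
Qed.

Lemma fidelity_le_err_uniform :
  exists2 p, 0 < p & forall N w c, 0 <= c -> c <= err N w -> fid N <= 1 - p * c.
Proof.
exists (\big[Num.min/Pw ord0]_w Pw w); first by apply/bigmin_gtP.
move=> N w c c_ge0 c_le; apply: le_trans (fidelity_le_err c_ge0 c_le) _.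
by rewrite lerD2l lerN2 ler_wpM2r // (bigmin_le _ w).
Qed.

Lemma err_ge_of_excess_neg N eta : (0 < N)%N -> eta < 0 ->
  Num.sqrt N%:R * exc N <= eta -> exists w, 4 * eta ^+ 2 / (1 + 4 * eta ^+ 2) <= err N w.
Proof.
move=> N_gt0 eta_lt0 exc_le; have [w m_le] := margin_le_of_excess N_gt0 exc_le.
have N_gt0R : (0 : R) < N%:R by rewrite ltr0n.
have sN_gt0 : 0 < Num.sqrt (N%:R : R) by rewrite sqrtr_gt0.
have m_lt0 : marg N w < 0 by apply: le_lt_trans m_le _; rewrite pmulr_rlt0.
exists w; apply: le_trans
  (err_prob_ge_of_margin_lt0 Pm_ge0 Pm_sum1 (@beta01 N) alpha_neq_mu N_gt0 m_lt0).
have m2_ge : N%:R * eta ^+ 2 <= marg N w ^+ 2.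
  rewrite -sqrt_natr_sqr -exprMn -sqrrN -[marg N w ^+ 2]sqrrN !expr2.
  by apply: ler_pM; rewrite ?lerN2 // oppr_ge0 pmulr_rle0 // ltW.
have e2_gt0 : 0 < 1 + 4 * eta ^+ 2 by rewrite ltr_pwDl // mulr_ge0 // sqr_ge0.
have m2_gt0 : 0 < N%:R + 4 * marg N w ^+ 2 by rewrite ltr_pwDl // mulr_ge0 // sqr_ge0.
by rewrite ler_pdivrMr // mulrAC ler_pdivlMr //; nra.
Qed.

Lemma err_ge_of_excess_small N eta psi lam : (0 < N)%N -> 0 <= eta -> 0 < psi ->
  0 < lam -> eta <= Num.sqrt psi * (lam / 8 - lam^-1) ->
  4 * lam ^+ 2 <= psi * N%:R -> (forall w, psi * N%:R <= varA Pm (beta N) w) ->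
  Num.sqrt N%:R * exc N <= eta ->
  exists w, (1 - expR (-1)) ^+ 2 * expR (- (8 * lam ^+ 2)) <= err N w.
Proof.
move=> N_gt0 eta_ge0 psi_gt0 lam_gt0 eta_le lam_le var_ge exc_le.
have [w m_le] := margin_le_of_excess N_gt0 exc_le; exists w.
set V := vote_var Pm (beta N) w; set slack := lam / 8 - lam^-1.
have V_ge : psi * N%:R <= V by rewrite /V -(varAE (beta N) Pm_sum1).
have slack_ge0 : 0 <= slack.
  have sp_gt0 : 0 < Num.sqrt psi by rewrite sqrtr_gt0.
  by rewrite -(pmulr_rge0 _ sp_gt0); apply: le_trans eta_le.
apply: (err_prob_ge_of_margin_small Pm_ge0 Pm_sum1 (@beta01 N) alpha_neq_mu lam_gt0).
  exact: le_trans lam_le V_ge.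
apply: (le_trans m_le); apply: (le_trans (y := Num.sqrt N%:R * (Num.sqrt psi * slack))).
  by rewrite ler_wpM2l ?sqrtr_ge0.
by rewrite mulrA -sqrtrM ?ler0n // ler_wpM2r // ler_wsqrtr // mulrC.
Qed.

Lemma fidelity_le_of_excess_neg eta (calN : nat -> Prop) : eta < 0 ->
  (forall N, calN N -> (0 < N)%N -> Num.sqrt N%:R * exc N <= eta) ->
  exists (Neta : nat) (c : R), (0 < Neta)%N /\ 0 < c /\
    forall N, calN N -> (Neta < N)%N -> fid N <= 1 - c.
Proof.
move=> eta_lt0 exc_le; have [p p_gt0 fid_le] := fidelity_le_err_uniform.
have e4_gt0 : 0 < 4 * eta ^+ 2 by rewrite pmulr_rgt0 // exprn_even_gt0 //= lt_eqF.
exists 1%N, (p * (4 * eta ^+ 2 / (1 + 4 * eta ^+ 2))); split=> //; split.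
  by rewrite mulr_gt0 // divr_gt0 // addr_gt0.
move=> N calN_N N_gt1; have N_gt0 := ltn_trans (ltnSn 0) N_gt1.
have [w err_ge] := err_ge_of_excess_neg N_gt0 eta_lt0 (exc_le N calN_N N_gt0).
by apply: fid_le err_ge; rewrite divr_ge0 // ?addr_ge0 // ltW.
Qed.

Lemma fidelity_le_of_excess_small eta psi (calN : nat -> Prop) : 0 <= eta -> 0 < psi ->
  (forall N, calN N -> (0 < N)%N -> Num.sqrt N%:R * exc N <= eta) ->
  (forall N, calN N -> forall w, psi * N%:R <= varA Pm (beta N) w) ->
  exists (Neta : nat) (c : R), (0 < Neta)%N /\ 0 < c /\
    forall N, calN N -> (Neta < N)%N -> fid N <= 1 - c.
Proof.
move=> eta_ge0 psi_gt0 exc_le var_ge; have [p p_gt0 fid_le] := fidelity_le_err_uniform.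
have sp_gt0 : 0 < Num.sqrt psi by rewrite sqrtr_gt0.
set lam := 8 * (eta / Num.sqrt psi + 1).
have lam_ge8 : 8 <= lam by rewrite /lam -[X in X <= _]mulr1 ler_pM2l // lerDr divr_ge0 // ltW.
have lam_gt0 : 0 < lam by apply: lt_le_trans lam_ge8.
have eta_le : eta <= Num.sqrt psi * (lam / 8 - lam^-1).
  have -> : lam / 8 = eta / Num.sqrt psi + 1 by rewrite /lam; field; rewrite lt0r_neq0.
  rewrite -addrA mulrDr mulrC divfK ?lt0r_neq0 // lerDl mulr_ge0 ?sqrtr_ge0 // subr_ge0.
  by rewrite invf_le1 //; lra.
have [Nb Nb_gt] : exists Nb : nat, 4 * lam ^+ 2 / psi < Nb%:R by eexists; exact: truncnS_gt.
have Nb_gt0 : (0 < Nb)%N.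
  by rewrite -(ltr0n R) (lt_trans _ Nb_gt) // divr_gt0 // mulr_gt0 // exprn_gt0.
set c := (1 - expR (-1)) ^+ 2 * expR (- (8 * lam ^+ 2)).
have c_gt0 : 0 < c.
  by rewrite mulr_gt0 ?expR_gt0 // exprn_gt0 // subr_gt0 -[X in _ < X]expR0 ltr_expR ltrN10.
exists Nb, (p * c); split=> //; split; first exact: mulr_gt0.
move=> N calN_N Nb_lt; have N_gt0 := ltn_trans Nb_gt0 Nb_lt.
have lam_le : 4 * lam ^+ 2 <= psi * N%:R.
  rewrite -ler_pdivrMl // mulrC; apply: (le_trans (ltW Nb_gt)).
  by rewrite ler_nat ltnW.
have [w err_ge] := err_ge_of_excess_small N_gt0 eta_ge0 psi_gt0 lam_gt0 eta_le lam_le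
  (var_ge N calN_N) (exc_le N calN_N N_gt0).
by apply: fid_le err_ge; exact: ltW.
Qed.

End InstanceSequence.

Theorem theorem7 (R : realType) (Wn M : nat)
  (Pw : 'I_Wn.+1 -> R) (Pm : 'I_M -> 'I_Wn.+1 -> R) (mu : R)
  (alpha : 'I_Wn.+1 -> R)
  (* prior *)
  (HPw_pos : forall w, 0 < Pw w) (HPw_sum : \sum_w Pw w = 1)
  (* signal distributions *)
  (HPm_ge0 : forall m w, 0 <= Pm m w) (HPm_sum : forall w, \sum_m Pm m w = 1)
  (* stochastic dominance: higher states give (first-order) higher signals *)
  (HPm_dom : forall (w1 w2 : 'I_Wn.+1) (k : 'I_M), (w1 <= w2)%N ->
      \sum_(m : 'I_M | (k <= m)%N) Pm m w1 <= \sum_(m : 'I_M | (k <= m)%N) Pm m w2)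
  (* threshold and informed-majority shares *)
  (Hmu : 0 < mu < 1) (Halpha : forall w, alpha w != mu)
  (HL : exists w, alpha w < mu) (HH : exists w, mu < alpha w)
  (* sequence of strategy profiles: beta N n m *)
  (beta : forall N : nat, 'I_N -> 'I_M -> R)
  (Hbeta : forall N n m, 0 <= beta N n m <= 1) :
  let fN := fun N : nat => excess Pm (beta N) mu alpha in
  let AN := fun N : nat => fidelity Pw Pm (beta N) mu alpha in
  (* (i) *)
  ((forall K : R, exists N0 : nat, forall N : nat, (N0 <= N)%N ->
        K <= Num.sqrt (N%:R) * fN N) ->
     forall eps : R, 0 < eps -> exists N0 : nat, forall N : nat, (N0 <= N)%N ->
        `|AN N - 1| < eps)
  /\
  (* (ii) *)
  (forall (eta : R) (calN : nat -> Prop),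
     eta < 0 ->
     (forall K : nat, exists N : nat, (K < N)%N /\ calN N) ->
     (forall N : nat, calN N -> (0 < N)%N -> Num.sqrt (N%:R) * fN N <= eta) ->
     exists (Neta : nat) (c : R), (0 < Neta)%N /\ 0 < c /\
       forall N : nat, calN N -> (Neta < N)%N -> AN N <= 1 - c)
  /\
  (* (iii) *)
  (forall (eta psi : R) (calN : nat -> Prop),
     0 <= eta ->
     (forall K : nat, exists N : nat, (K < N)%N /\ calN N) ->
     (forall N : nat, calN N -> (0 < N)%N -> Num.sqrt (N%:R) * fN N <= eta) ->
     0 < psi ->
     (forall N : nat, calN N -> forall w : 'I_Wn.+1,
        psi * N%:R <= varA Pm (beta N) w) ->
     exists (Neta : nat) (c : R), (0 < Neta)%N /\ 0 < c /\
       forall N : nat, calN N -> (Neta < N)%N -> AN N <= 1 - c).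
Proof.
move=> fN AN; split; last split.
- exact: fidelity_cvg1.
- move=> eta calN eta_lt0 _ exc_le; exact: fidelity_le_of_excess_neg exc_le.
- move=> eta psi calN eta_ge0 _ exc_le psi_gt0 var_ge.
  exact: fidelity_le_of_excess_small exc_le var_ge.
Qed.
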